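(* Suppose $P$ is a convex, non-degenerate Euclidean polygon in $\mathbb{R}^2$ which is symmetric under rotation by $\pi$ about the origin. Then there exist $A\in SL(2,\mathbb{R})$ and $r>0$ such that $B^1(r)\subseteq A\cdot P\subseteq B^\infty(r)$.
   Context: $B^1(r)$ and $B^\infty(r)$ denote the closed balls of radius $r$ about the origin in $\mathbb{R}^2$ with respect to the $\ell^1$ and $\ell^\infty$ norms respectively. Non-degenerate means $P$ has nonempty interior (is not contained in a line). *)

From HB Require Import structures.
From mathcomp Require Import all_boot all_order all_algebra.
From mathcomp Require Import reals.
Set Implicit Arguments. Unset Strict Implicit. Unset Printing Implicit Defensive.
Import Order.TTheory GRing.Theory Num.Theory.
Local Open Scope ring_scope.

Definition pt (R : realType) := 'cV[R]_2.
Definition xc (R : realType) (p : pt R) : R := p 0 0.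
Definition yc (R : realType) (p : pt R) : R := p 1 0.

Definition conv_hull (R : realType) (s : seq (pt R)) : pt R -> Prop :=
  fun p => exists w : 'I_(size s) -> R,
    (forall i, 0 <= w i) /\ \sum_i w i = 1 /\ p = \sum_i w i *: s`_i.

Definition convex_polygon (R : realType) (P : pt R -> Prop) : Prop :=
  exists s : seq (pt R), forall p, P p <-> conv_hull s p.

(* Non-degenerate: nonempty interior (an open square around some point lies in P). *)
Definition nondegenerate_polygon (R : realType) (P : pt R -> Prop) : Prop :=
  exists c : pt R, exists e : R, 0 < e /\
    forall q : pt R, `|xc q - xc c| < e -> `|yc q - yc c| < e -> P q.

Definition centrally_symmetric (R : realType) (P : pt R -> Prop) : Prop :=
  forall p, P p -> P (- p).

Definition lin_image (R : realType) (A : 'M[R]_2) (P : pt R -> Prop) : pt R -> Prop :=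
  fun q => exists p, P p /\ q = A *m p.

Definition ball1 (R : realType) (r : R) : pt R -> Prop :=
  fun p => `|xc p| + `|yc p| <= r.
Definition ballinf (R : realType) (r : R) : pt R -> Prop :=
  fun p => Num.max `|xc p| `|yc p| <= r.

Definition subset_pts (R : realType) (P Q : pt R -> Prop) : Prop :=
  forall p, P p -> Q p.

From HB Require Import structures.
From mathcomp Require Import all_boot all_order all_algebra.
From mathcomp Require Import reals ring lra.
Import Order.TTheory GRing.Theory Num.Theory.
Set Implicit Arguments. Unset Strict Implicit.
Local Open Scope ring_scope.

(* Among the vertices of the polygon pick [u], [v] maximising the area form
   [D = det(u, v)]; since [det] is bilinear, [D] also bounds [|det(p, q)|] on
   the whole polygon, and [D > 0] because the polygon has interior.  The map
   [A] sending [u], [v] to [t e1], [t e2] with [t = sqrt D] has determinant 1.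
   Convexity and central symmetry put [conv(+-u, +-v)], i.e. the preimage of
   [B^1(t)], inside the polygon, while the coordinates of [A p] are
   [t/D det(p, v)] and [t/D det(u, p)], whence [A P] lies in [B^oo(t)]. *)

Lemma det_mx22 (R : comNzRingType) (A : 'M[R]_2) :
  \det A = A 0 0 * A 1 1 - A 0 1 * A 1 0.
Proof.
rewrite (expand_det_row _ ord0) !big_ord_recl big_ord0 addr0 /cofactor.
rewrite !det_mx11 !mxE /= expr0 expr1 mul1r mulN1r mulrN.
by congr (_ * A _ _ - A _ _ * A _ _); apply: val_inj.
Qed.

Section Plane.
Variable R : realType.
Implicit Types (p q u v : pt R) (a b : R).

Definition det2 p q : R := xc p * yc q - yc p * xc q.

Lemma det2_swap p q : det2 p q = - det2 q p.
Proof. rewrite /det2; ring. Qed.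

Definition mkpt (x y : R) : pt R := \col_(i < 2) (if i == 0 then x else y).

Lemma xc_mkpt x y : xc (mkpt x y) = x. Proof. by rewrite /xc mxE. Qed.
Lemma yc_mkpt x y : yc (mkpt x y) = y. Proof. by rewrite /yc mxE. Qed.

Lemma pt_ext p q : xc p = xc q -> yc p = yc q -> p = q.
Proof.
move=> hx hy; apply/matrixP => i j; rewrite (ord1 j).
case: i => [[|[|m]] hi] //.
- by have -> : Ordinal hi = 0 by apply: val_inj.
- by have -> : Ordinal hi = 1 by apply: val_inj.
Qed.

Lemma mkpt_coord p : mkpt (xc p) (yc p) = p.
Proof. by apply: pt_ext; rewrite ?xc_mkpt ?yc_mkpt. Qed.

Lemma xc_comb a b u v : xc (a *: u + b *: v) = a * xc u + b * xc v.
Proof. by rewrite /xc !mxE. Qed.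
Lemma yc_comb a b u v : yc (a *: u + b *: v) = a * yc u + b * yc v.
Proof. by rewrite /yc !mxE. Qed.

Lemma xc_mulmx (A : 'M[R]_2) p : xc (A *m p) = A 0 0 * xc p + A 0 1 * yc p.
Proof.
rewrite /xc /yc mxE !big_ord_recl big_ord0 addr0.
by congr (_ * _ + A _ _ * p _ _); apply: val_inj.
Qed.
Lemma yc_mulmx (A : 'M[R]_2) p : yc (A *m p) = A 1 0 * xc p + A 1 1 * yc p.
Proof.
rewrite /xc /yc mxE !big_ord_recl big_ord0 addr0.
by congr (_ * _ + A _ _ * p _ _); apply: val_inj.
Qed.

Section Hull.
Variable s : seq (pt R).
Local Notation n := (size s).

Lemma conv_hull_nth (i : 'I_n) : conv_hull s s`_i.
Proof.
exists (fun j => (j == i)%:R); split; [|split].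
- by move=> j; rewrite ler0n.
- by rewrite (bigD1 i) //= eqxx big1 ?addr0 // => j /negbTE ->.
- rewrite (bigD1 i) //= eqxx scale1r big1 ?addr0 // => j /negbTE ->.
  by rewrite scale0r.
Qed.

Lemma conv_hull_size_gt0 p : conv_hull s p -> (0 < n)%N.
Proof.
case=> w [_ [sw _]]; move: sw; case: n w => [|m] w //.
by rewrite big_ord0 => /eqP; rewrite eq_sym oner_eq0.
Qed.

Lemma conv_hull_comb3 p q r a b c :
  conv_hull s p -> conv_hull s q -> conv_hull s r ->
  0 <= a -> 0 <= b -> 0 <= c -> a + b + c = 1 ->
  conv_hull s (a *: p + b *: q + c *: r).
Proof.
move=> [w1 [h1 [s1 ->]]] [w2 [h2 [s2 ->]]] [w3 [h3 [s3 ->]]] ha hb hc habc.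
exists (fun i => a * w1 i + b * w2 i + c * w3 i); split; [|split].
- by move=> i; rewrite !addr_ge0 // mulr_ge0.
- by rewrite !big_split /= -!mulr_sumr s1 s2 s3 !mulr1.
- rewrite !scaler_sumr -!big_split; apply: eq_bigr => i _.
  by rewrite !scalerDl !scalerA.
Qed.

Lemma conv_hull_cross u v a b :
  conv_hull s u -> conv_hull s (- u) -> conv_hull s v -> conv_hull s (- v) ->
  `|a| + `|b| <= 1 -> conv_hull s (a *: u + b *: v).
Proof.
move=> hu hNu hv hNv hab.
have signed w c : conv_hull s w -> conv_hull s (- w) ->
    exists2 w', conv_hull s w' & c *: w = `|c| *: w'.
  move=> hw hNw; have [hc|hc] := lerP 0 c; first by exists w; rewrite ?ger0_norm.
  by exists (- w); rewrite // ltr0_norm // scaleNr scalerN opprK.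
have h0 : conv_hull s 0.
  have := conv_hull_comb3 (a := 1/2) (b := 1/2) (c := 0) hu hNu hu.
  rewrite scale0r scalerN subrr !addr0; apply; lra.
have [u' hu' ->] := signed u a hu hNu.
have [v' hv' ->] := signed v b hv hNv.
have := conv_hull_comb3 (c := 1 - `|a| - `|b|) hu' hv' h0 (normr_ge0 a) (normr_ge0 b).
by rewrite scaler0 addr0; apply; lra.
Qed.

Lemma det2_conv_hull_le M p q : (forall i : 'I_n, `|det2 s`_i q| <= M) ->
  conv_hull s p -> `|det2 p q| <= M.
Proof.
move=> hM [w [hw [sw ->]]].
have -> : det2 (\sum_i w i *: s`_i) q = \sum_i w i * det2 s`_i q.
  rewrite /det2 /xc /yc !summxE !mulr_suml -sumrB.
  by apply: eq_bigr => i _; rewrite !mxE; ring.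
apply: (le_trans (ler_norm_sum _ _ _)).
apply: (@le_trans _ _ (\sum_i w i * M)); last by rewrite -mulr_suml sw mul1r.
by apply: ler_sum => i _; rewrite normrM (ger0_norm (hw i)) ler_wpM2l.
Qed.

Lemma det2_conv_hull_le2 M p q : (forall i j : 'I_n, `|det2 s`_i s`_j| <= M) ->
  conv_hull s p -> conv_hull s q -> `|det2 p q| <= M.
Proof.
move=> hM hp hq; apply: det2_conv_hull_le => // i.
by rewrite det2_swap normrN; apply: det2_conv_hull_le.
Qed.

Lemma conv_hull_det2_neq0 c e : 0 < e ->
  (forall q, `|xc q - xc c| < e -> `|yc q - yc c| < e -> conv_hull s q) ->
  exists p q, [/\ conv_hull s p, conv_hull s q & det2 p q != 0].
Proof.
move=> he hsq; pose d := e / 2.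
have [hd0 hde] : 0 < d /\ d < e by rewrite /d; split; lra.
pose q1 := mkpt (xc c + d) (yc c); pose q2 := mkpt (xc c) (yc c + d).
have near x y : `|x + y - x| < e = (`|y| < e) by rewrite addrC addKr.
have h0 : conv_hull s c by apply: hsq; rewrite subrr normr0.
have h1 : conv_hull s q1.
  by apply: hsq; rewrite ?xc_mkpt ?yc_mkpt ?subrr ?normr0 // near gtr0_norm.
have h2 : conv_hull s q2.
  by apply: hsq; rewrite ?xc_mkpt ?yc_mkpt ?subrr ?normr0 // near gtr0_norm.
have area : det2 q1 q2 - det2 c q2 - det2 q1 c = d ^+ 2.
  by rewrite /det2 !xc_mkpt !yc_mkpt; ring.
have [/eqP z12|] := boolP (det2 q1 q2 == 0); last by exists q1, q2.
have [/eqP z02|] := boolP (det2 c q2 == 0); last by exists c, q2.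
have [/eqP z10|] := boolP (det2 q1 c == 0); last by exists q1, c.
by move: area; rewrite z12 z02 z10 !subr0 => /esym/eqP; rewrite sqrf_eq0 gt_eqF.
Qed.

Lemma conv_hull_det2_max p0 q0 :
  conv_hull s p0 -> conv_hull s q0 -> det2 p0 q0 != 0 ->
  exists u v, [/\ conv_hull s u, conv_hull s v, 0 < det2 u v &
    forall p q, conv_hull s p -> conv_hull s q -> `|det2 p q| <= det2 u v].
Proof.
move=> hp0 hq0 hpq0; have i0 := Ordinal (conv_hull_size_gt0 hp0).
pose F (k : 'I_n * 'I_n) := `|det2 s`_k.1 s`_k.2|.
have [[i j] _ /= hmax] := @arg_maxP _ _ _ (i0, i0) xpredT F erefl.
have hle p q : conv_hull s p -> conv_hull s q -> `|det2 p q| <= F (i, j).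
  by apply: det2_conv_hull_le2 => k l; apply: (hmax (k, l)).
have hF : 0 < F (i, j).
  by rewrite (lt_le_trans _ (hle _ _ hp0 hq0)) // normr_gt0.
have [hpos|hneg] := ltrP 0 (det2 s`_i s`_j).
  exists s`_i, s`_j; split; [exact: conv_hull_nth..|done|] => p q hp hq.
  by rewrite -(gtr0_norm hpos); apply: hle.
have hlt : det2 s`_i s`_j < 0.
  by rewrite lt_neqAle hneg andbT -normr_gt0.
exists s`_j, s`_i; split; [exact: conv_hull_nth..|by rewrite det2_swap oppr_gt0|].
by move=> p q hp hq; rewrite [det2 s`_j _]det2_swap -(ltr0_norm hlt); apply: hle.
Qed.

End Hull.

Section Normalizer.
Variables u v : pt R.
Hypothesis det2_uv_gt0 : 0 < det2 u v.

Let D := det2 u v.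
Definition nscale := Num.sqrt D.
Let k := nscale / D.

(* [nscale] times the inverse of the matrix with columns [u] and [v]. *)
Definition normalizer : 'M[R]_2 :=
  \matrix_(i < 2, j < 2) (k *
    if i == 0 then (if j == 0 then yc v else - xc v)
    else (if j == 0 then - yc u else xc u)).

Lemma nscale_gt0 : 0 < nscale.
Proof. by rewrite sqrtr_gt0. Qed.

Lemma det_normalizer : \det normalizer = 1.
Proof.
rewrite det_mx22 !mxE /=.
have -> : k * yc v * (k * xc u) - k * - xc v * (k * - yc u) = k ^+ 2 * D.
  by rewrite /D /det2; ring.
rewrite /k expr_div_n sqr_sqrtr ?ltW // -/D.
by field; rewrite gt_eqF.
Qed.

Lemma xc_normalizer p : xc (normalizer *m p) = k * det2 p v.
Proof. by rewrite xc_mulmx !mxE /= /det2; ring. Qed.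

Lemma yc_normalizer p : yc (normalizer *m p) = k * det2 u p.
Proof. by rewrite yc_mulmx !mxE /= /det2; ring. Qed.

Lemma normalizer_comb a b :
  normalizer *m (a *: u + b *: v) = mkpt (nscale * a) (nscale * b).
Proof.
have kD : k * D = nscale by rewrite /k divfK ?gt_eqF.
apply: pt_ext; rewrite (xc_normalizer, yc_normalizer) (xc_mkpt, yc_mkpt);
  by rewrite -kD /D /det2 xc_comb yc_comb; ring.
Qed.

Lemma normalizer_bounded p :
  `|det2 p v| <= D -> `|det2 u p| <= D -> ballinf nscale (normalizer *m p).
Proof.
have k_gt0 : 0 < k by rewrite divr_gt0 ?nscale_gt0.
have kD : k * D = nscale by rewrite /k divfK ?gt_eqF.
move=> hx hy; rewrite /ballinf xc_normalizer yc_normalizer ge_max !(normrM k).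
by rewrite (gtr0_norm k_gt0) -kD !ler_pM2l ?hx ?hy.
Qed.

End Normalizer.
End Plane.

Theorem lemma6p5 (R : realType) (P : pt R -> Prop) :
  convex_polygon P -> nondegenerate_polygon P -> centrally_symmetric P ->
  exists (A : 'M[R]_2) (r : R),
    \det A = 1 /\ 0 < r /\
    subset_pts (ball1 r) (lin_image A P) /\ subset_pts (lin_image A P) (ballinf r).
Proof.
move=> [s hs] [c [e [he hsq]]] hsym.
have hN w : conv_hull s w -> conv_hull s (- w) by move=> /hs /hsym /hs.
have [p0 [q0 [hp0 hq0 hpq0]]] :=
  conv_hull_det2_neq0 (c := c) he (fun q hx hy => proj1 (hs q) (hsq q hx hy)).
have [u [v [hu hv hD hmax]]] := conv_hull_det2_max hp0 hq0 hpq0.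
have ht := nscale_gt0 hD.
exists (normalizer u v), (nscale u v); split; [exact: det_normalizer|split=> //; split].
- move=> q hq; exists ((xc q / nscale u v) *: u + (yc q / nscale u v) *: v); split.
    apply/hs/conv_hull_cross; [done|exact: hN|done|exact: hN|].
    have ht' : 0 < (nscale u v)^-1 by rewrite invr_gt0.
    by rewrite !normrM (gtr0_norm ht') -mulrDl ler_pdivrMr // mul1r.
  have tK x : nscale u v * (x / nscale u v) = x by rewrite mulrCA divff ?mulr1 ?gt_eqF.
  by rewrite normalizer_comb // !tK mkpt_coord.
- move=> _ [p [/hs hp ->]].
  by apply: normalizer_bounded; rewrite ?hmax.
Qed.
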